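(* Let $G$ be a graph with no induced $P_7$, $C_4$, $C_6$ or $C_7$ and let $H=(B_1,\dots,B_5)$ be a nice blowup of $C_5$ in $G$. Then $G[A_3(i)]$ contains no induced path on four vertices, for each $i\in\{1,\dots,5\}$.
   Context: Indices modulo $5$. A nice blowup of $C_5$ is a tuple $(B_1,\dots,B_5)$ of pairwise disjoint cliques such that every vertex of $B_j$ has a neighbor in $B_{j-1}$ and in $B_{j+1}$, $B_j$ is anticomplete to $B_{j+2}$, and there are no $a\in B_j$, distinct $b,c\in B_{j+1}$, $d\in B_{j+2}$ with $G[\{a,b,c,d\}]\cong P_4$; $V(H)=\bigcup B_j$. For $v\notin V(H)$, $\operatorname{supp}(v)$ is the set of $j$ such that $v$ has a neighbor in $B_j$; $A_3(i)=\{v\notin V(H):\operatorname{supp}(v)=\{i-1,i,i+1\}\}$. *)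

From mathcomp Require Import all_boot.
Set Implicit Arguments. Unset Strict Implicit. Unset Printing Implicit Defensive.

Definition simple_graph (T : finType) (e : rel T) : Prop :=
  symmetric e /\ irreflexive e.

Definition induced_path (T : finType) (e : rel T) (s : seq T) : Prop :=
  uniq s /\ forall (x0 : T) (i j : nat), i < size s -> j < size s ->
    e (nth x0 s i) (nth x0 s j) = (i == j.+1) || (j == i.+1).

Definition induced_cycle (T : finType) (e : rel T) (s : seq T) : Prop :=
  uniq s /\ forall (x0 : T) (i j : nat), i < size s -> j < size s ->
    e (nth x0 s i) (nth x0 s j) =
      (i == j.+1 %% size s) || (j == i.+1 %% size s).

Definition has_induced_P (T : finType) (e : rel T) (k : nat) : Prop :=
  exists s : seq T, size s = k /\ induced_path e s.
Definition has_induced_C (T : finType) (e : rel T) (k : nat) : Prop :=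
  exists s : seq T, size s = k /\ induced_cycle e s.

Definition is_clique (T : finType) (e : rel T) (A : {set T}) : Prop :=
  forall x y, x \in A -> y \in A -> x != y -> e x y.

Definition anticomplete (T : finType) (e : rel T) (A B : {set T}) : Prop :=
  forall x y, x \in A -> y \in B -> ~~ e x y.

Definition induces_P4 (T : finType) (e : rel T) (a b c d : T) : Prop :=
  exists s : seq T, size s = 4 /\ perm_eq s [:: a; b; c; d] /\ induced_path e s.

(* Indices modulo 5: ordS = j+1, ord_pred = j-1 in 'I_5. *)
Definition nxt (j : 'I_5) : 'I_5 := ordS j.
Definition prv (j : 'I_5) : 'I_5 := ord_pred j.

Definition nice_blowup (T : finType) (e : rel T) (B : 'I_5 -> {set T}) : Prop :=
  [/\ (forall j k, j != k -> [disjoint B j & B k]),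
      (forall j, is_clique e (B j)),
      (forall j v, v \in B j ->
         (exists2 u, u \in B (prv j) & e v u) /\
         (exists2 u, u \in B (nxt j) & e v u)),
      (forall j, anticomplete e (B j) (B (nxt (nxt j)))) &
      (forall j a b c d, a \in B j -> b \in B (nxt j) -> c \in B (nxt j) ->
         b != c -> d \in B (nxt (nxt j)) -> ~ induces_P4 e a b c d)].

Definition VH (T : finType) (B : 'I_5 -> {set T}) : {set T} :=
  \bigcup_(j < 5) B j.

Definition supp (T : finType) (e : rel T) (B : 'I_5 -> {set T}) (v : T)
  : {set 'I_5} := [set j | [exists u in B j, e v u]].

Definition A3 (T : finType) (e : rel T) (B : 'I_5 -> {set T}) (i : 'I_5)
  : {set T} :=
  [set v | (v \notin VH B) && (supp e B v == [set prv i; i; nxt i])].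

From mathcomp Require Import all_boot.

(* Let X = B_(i-1) and Y = B_(i+1): they are disjoint anticomplete cliques, and
   every vertex of A_3(i) lies outside both and has neighbours in each.  Since G
   has no induced C_4, two adjacent vertices outside a clique Z have nested
   neighbourhoods in Z.  So along an induced path a-b-c-d of such vertices, if a
   and c have no common neighbour in Z then N_Z(a) is contained in N_Z(b); it
   follows that b and d have a common neighbour in Z while a and d have none.
   Moreover every non-adjacent pair has a common neighbour in exactly one of X
   and Y: in both gives an induced C_4, in neither an induced C_6.  Now let Z be
   the clique where a and c have no common neighbour and W the other one: b and
   d have a common neighbour in Z, hence none in W, and then (reading the path
   backwards) a and d have a common neighbour neither in Z nor in W. *)

Set Implicit Arguments. Unset Strict Implicit. Unset Printing Implicit Defensive.

Lemma disjoint_self (T : finType) (A : {set T}) : [disjoint A & A] = (A == set0).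
Proof. by rewrite -setI_eq0 setIid. Qed.

Section Graph.
Variables (T : finType) (e : rel T).
Hypotheses (e_sym : symmetric e) (e_irr : irreflexive e).

Lemma induced_C4 p q r s : e p q -> e q r -> e r s -> e s p ->
  ~~ e p r -> ~~ e q s -> p != r -> q != s -> has_induced_C e 4.
Proof.
move=> pq qr rs sp /negbTE pr /negbTE qs npr nqs.
exists [:: p; q; r; s]; split => //; split.
  have neq_adj u v : e u v -> u != v by apply: contraTneq => ->; rewrite e_irr.
  by rewrite /= !inE !negb_or npr nqs !neq_adj // e_sym.
move=> x0 [|[|[|[|i]]]] [|[|[|[|j]]]] //= _ _;
  by rewrite ?e_irr ?pq ?qr ?rs ?sp ?pr ?qs // e_sym ?pq ?qr ?rs ?sp ?pr ?qs.
Qed.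

Lemma induced_C6 v0 v1 v2 v3 v4 v5 :
  e v0 v1 -> e v1 v2 -> e v2 v3 -> e v3 v4 -> e v4 v5 -> e v5 v0 ->
  ~~ e v0 v2 -> ~~ e v0 v3 -> ~~ e v0 v4 -> ~~ e v1 v3 -> ~~ e v1 v4 ->
  ~~ e v1 v5 -> ~~ e v2 v4 -> ~~ e v2 v5 -> ~~ e v3 v5 -> has_induced_C e 6.
Proof.
move=> e01 e12 e23 e34 e45 e50.
move=> /negbTE n02 /negbTE n03 /negbTE n04 /negbTE n13 /negbTE n14.
move=> /negbTE n15 /negbTE n24 /negbTE n25 /negbTE n35.
exists [:: v0; v1; v2; v3; v4; v5]; split => //; split.
  rewrite /= !inE !negb_or /= andbT.
  by repeat (apply/andP; split); apply/eqP => E; subst;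
    first [ by rewrite e_irr in e01 e12 e23 e34 e45 e50 | have := e_sym; congruence].
move=> x0 [|[|[|[|[|[|i]]]]]] [|[|[|[|[|[|j]]]]]] //= _ _;
  by rewrite ?e_irr ?e01 ?e12 ?e23 ?e34 ?e45 ?e50 ?n02 ?n03 ?n04 ?n13 ?n14 ?n15
     ?n24 ?n25 ?n35 // e_sym ?e01 ?e12 ?e23 ?e34 ?e45 ?e50 ?n02 ?n03 ?n04 ?n13
     ?n14 ?n15 ?n24 ?n25 ?n35.
Qed.

Definition is_P4 a b c d :=
  [&& e a b, e b c & e c d] && [&& ~~ e a c, ~~ e b d & ~~ e a d].

Lemma induced_path_is_P4 a b c d : induced_path e [:: a; b; c; d] -> is_P4 a b c d.
Proof.
by case=> _ adj; rewrite /is_P4 (adj a 0 1) ?(adj a 1 2) ?(adj a 2 3) ?(adj a 0 2)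
  ?(adj a 1 3) ?(adj a 0 3).
Qed.

Lemma is_P4_rev a b c d : is_P4 a b c d -> is_P4 d c b a.
Proof.
case/andP=> /and3P[ab bc cd] /and3P[ac bd ad].
by rewrite /is_P4 (e_sym d c) (e_sym c b) (e_sym b a) (e_sym d b) (e_sym c a) (e_sym d a)
  ab bc cd ac bd ad.
Qed.

Lemma is_P4_neq a b c d : is_P4 a b c d -> [/\ a != c, b != d & a != d].
Proof.
case/andP=> /and3P[ab _ cd] /and3P[_ bd ad]; split.
- by apply: contraNneq ad => ->.
- by apply: contraNneq ad => <-.
- by apply: contraNneq bd => <-; rewrite e_sym.
Qed.

Definition nbrs_in (Z : {set T}) v := [set z in Z | e v z].
Definition attached (Z : {set T}) v := (v \notin Z) && (nbrs_in Z v != set0).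

Lemma disjoint_nbrs_in_nadj Z u v z :
  [disjoint nbrs_in Z u & nbrs_in Z v] -> z \in Z -> e u z -> ~~ e v z.
Proof.
move=> duv zZ uz; have zu : z \in nbrs_in Z u by rewrite inE zZ.
by move: (disjointFr duv zu); rewrite inE zZ /= => ->.
Qed.

Section C4Free.
Hypothesis noC4 : ~ has_induced_C e 4.

Lemma nbrs_in_nested Z p q : is_clique e Z -> p \notin Z -> q \notin Z -> e p q ->
  (nbrs_in Z p \subset nbrs_in Z q) || (nbrs_in Z q \subset nbrs_in Z p).
Proof.
move=> clZ pZ qZ pq; case/boolP: (nbrs_in Z p \subset _) => //= /subsetPn[x].
rewrite !inE => /andP[xZ px]; rewrite xZ /= => qx.
apply/subsetP => y; rewrite !inE => /andP[yZ qy]; rewrite yZ /=.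
apply: contraT => py; case: noC4.
apply: (@induced_C4 p q y x) => //; last 2 first.
- by apply: contraNneq pZ => ->.
- by apply: contraNneq qZ => ->.
- by apply: clZ => //; apply: contraNneq qx => <-.
- by rewrite e_sym.
Qed.

Lemma nbrs_in_sub_middle Z p q r : is_clique e Z ->
  attached Z p -> attached Z q -> attached Z r -> e p q -> e q r ->
  [disjoint nbrs_in Z p & nbrs_in Z r] -> nbrs_in Z p \subset nbrs_in Z q.
Proof.
move=> clZ /andP[pZ _] /andP[qZ Nq] /andP[rZ Nr] pq qr dpr.
have /orP[//|sqp] := nbrs_in_nested clZ pZ qZ pq.
case/orP: (nbrs_in_nested clZ qZ rZ qr) => [sqr | srq].
- by move: Nq; rewrite -disjoint_self (disjointW sqp sqr dpr).
- by move: Nr; rewrite -disjoint_self (disjointWl (subset_trans srq sqp) dpr).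
Qed.

Section P4Attached.
Variables (Z : {set T}) (a b c d : T).
Hypotheses (clZ : is_clique e Z) (P : is_P4 a b c d).
Hypotheses (aZ : attached Z a) (bZ : attached Z b) (cZ : attached Z c) (dZ : attached Z d).

Lemma P4_common_nbr_in :
  ~~ [disjoint nbrs_in Z a & nbrs_in Z c] || ~~ [disjoint nbrs_in Z b & nbrs_in Z d].
Proof.
case/andP: P => /and3P[ab bc cd] _.
rewrite -negb_and; apply/negP => /andP[dac dbd].
have sab := nbrs_in_sub_middle clZ aZ bZ cZ ab bc dac.
have sbc := nbrs_in_sub_middle clZ bZ cZ dZ bc cd dbd.
by case/andP: aZ; rewrite -disjoint_self (disjointWr (subset_trans sab sbc) dac).
Qed.

Lemma P4_disjoint_nbrs_ac_ad :
  [disjoint nbrs_in Z a & nbrs_in Z c] -> [disjoint nbrs_in Z a & nbrs_in Z d].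
Proof.
case/andP: (P) => /and3P[ab bc cd] /and3P[_ bd _] dac.
have sab := nbrs_in_sub_middle clZ aZ bZ cZ ab bc dac.
rewrite -setI_eq0; apply: contraT => /set0Pn[z]; rewrite inE => /andP[za zd].
have /[!inE] /andP[zZ bz] := subsetP sab z za.
move: za zd; rewrite !inE zZ /= => az dz.
have cz : e c z.
  apply: contraT => ncz; case: noC4.
  have [_ nbd _] := is_P4_neq P.
  apply: (@induced_C4 b c d z) => //; first by rewrite e_sym.
  by case/andP: cZ => c_notin _; apply: contraNneq c_notin => ->.
by move: (disjoint_nbrs_in_nadj dac zZ az); rewrite cz.
Qed.

End P4Attached.

Section TwoCliques.
Hypothesis noC6 : ~ has_induced_C e 6.
Variables X Y : {set T}.
Hypotheses (clX : is_clique e X) (clY : is_clique e Y).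
Hypotheses (antiXY : anticomplete e X Y) (disjXY : [disjoint X & Y]).

Lemma disjoint_nbrs_inX_or_Y p q : ~~ e p q -> p != q ->
  [disjoint nbrs_in X p & nbrs_in X q] || [disjoint nbrs_in Y p & nbrs_in Y q].
Proof.
move=> pq npq; rewrite -!setI_eq0; apply: contraT; rewrite negb_or.
case/andP=> /set0Pn[x] /[!inE] /andP[/andP[xX px] /andP[_ qx]].
case/set0Pn=> y /[!inE] /andP[/andP[yY py] /andP[_ qy]].
case: noC4; apply: (@induced_C4 p x q y) => //.
- by rewrite e_sym.
- by rewrite e_sym.
- exact: antiXY.
- by apply: contraTneq yY => <-; rewrite (disjointFr disjXY xX).
Qed.

Lemma common_nbr_inX_or_Y p q : ~~ e p q ->
  nbrs_in X p != set0 -> nbrs_in X q != set0 ->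
  nbrs_in Y p != set0 -> nbrs_in Y q != set0 ->
  ~~ [disjoint nbrs_in X p & nbrs_in X q] || ~~ [disjoint nbrs_in Y p & nbrs_in Y q].
Proof.
move=> pq /set0Pn[xp] /[!inE] /andP[xpX pxp] /set0Pn[xq] /[!inE] /andP[xqX qxq].
move=> /set0Pn[yp] /[!inE] /andP[ypY pyp] /set0Pn[yq] /[!inE] /andP[yqY qyq].
rewrite -negb_and; apply/negP => /andP[dX dY].
have qxp := disjoint_nbrs_in_nadj dX xpX pxp.
have qyp := disjoint_nbrs_in_nadj dY ypY pyp.
rewrite disjoint_sym in dX; rewrite disjoint_sym in dY.
have pxq := disjoint_nbrs_in_nadj dX xqX qxq.
have pyq := disjoint_nbrs_in_nadj dY yqY qyq.
case: noC6; apply: (@induced_C6 p xp xq q yq yp) => //; try exact: antiXY.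
- by apply: clX => //; apply: contraNneq pxq => <-.
- by rewrite e_sym.
- by apply: clY => //; apply: contraNneq qyp => <-.
- by rewrite e_sym.
- by rewrite e_sym.
Qed.

Lemma disjoint_nbrs_inY_negX p q : ~~ e p q -> p != q ->
  attached X p -> attached X q -> attached Y p -> attached Y q ->
  [disjoint nbrs_in Y p & nbrs_in Y q] = ~~ [disjoint nbrs_in X p & nbrs_in X q].
Proof.
move=> pq npq /andP[_ pX] /andP[_ qX] /andP[_ pY] /andP[_ qY].
have := disjoint_nbrs_inX_or_Y pq npq; have := common_nbr_inX_or_Y pq pX qX pY qY.
by case: [disjoint nbrs_in X p & _]; case: [disjoint nbrs_in Y p & _].
Qed.

Lemma no_P4_attached_to_two_cliques a b c d : is_P4 a b c d ->
  (forall v, v \in [:: a; b; c; d] -> attached X v && attached Y v) -> False.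
Proof.
move=> P att.
have [/andP[aX aY] /andP[bX bY] /andP[cX cY] /andP[dX dY]] :
  [/\ attached X a && attached Y a, attached X b && attached Y b,
      attached X c && attached Y c & attached X d && attached Y d].
  by split; apply: att; rewrite !inE eqxx ?orbT.
have [nac nbd nad] := is_P4_neq P.
case/andP: (P) => _ /and3P[ac bd ad].
have Eac := disjoint_nbrs_inY_negX ac nac aX cX aY cY.
have Ebd := disjoint_nbrs_inY_negX bd nbd bX dX bY dY.
have Ead := disjoint_nbrs_inY_negX ad nad aX dX aY dY.
have SX := P4_common_nbr_in clX P aX bX cX dX.
have SY := P4_common_nbr_in clY P aY bY cY dY.
have LX := P4_disjoint_nbrs_ac_ad clX P aX bX cX.
have LY := P4_disjoint_nbrs_ac_ad clY P aY bY cY.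
have LX' := P4_disjoint_nbrs_ac_ad clX (is_P4_rev P) dX cX bX.
have LY' := P4_disjoint_nbrs_ac_ad clY (is_P4_rev P) dY cY bY.
rewrite !(disjoint_sym (nbrs_in _ d)) in LX' LY'.
case acX: [disjoint nbrs_in X a & nbrs_in X c].
- have bdY : [disjoint nbrs_in Y b & nbrs_in Y d] by rewrite Ebd; rewrite acX in SX.
  by move: (LY' bdY); rewrite Ead (LX acX).
- have acY : [disjoint nbrs_in Y a & nbrs_in Y c] by rewrite Eac acX.
  have bdX : [disjoint nbrs_in X b & nbrs_in X d] by move: SY; rewrite acY Ebd negbK.
  by move: (LY acY); rewrite Ead (LX' bdX).
Qed.

End TwoCliques.

End C4Free.

End Graph.

Lemma nxt_nxt_prv (j : 'I_5) : nxt (nxt (prv j)) = nxt j.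
Proof. by apply/val_inj; case: j => [[|[|[|[|[|?]]]]] ?]. Qed.

Lemma prv_neq_nxt (j : 'I_5) : prv j != nxt j.
Proof. by case: j => [[|[|[|[|[|?]]]]] ?]. Qed.

Lemma A3_attached (T : finType) (e : rel T) (B : 'I_5 -> {set T}) i j v :
  j \in [set prv i; i; nxt i] -> v \in A3 e B i -> attached e (B j) v.
Proof.
move=> ji /[!inE] /andP[vH /eqP supp_v]; apply/andP; split.
  by apply: contra vH => vB; apply/bigcupP; exists j.
move: ji; rewrite -supp_v inE => /existsP[u /andP[uB vu]].
by apply/set0Pn; exists u; rewrite inE uB.
Qed.

Theorem lemma8p5 (T : finType) (e : rel T) (B : 'I_5 -> {set T}) :
  simple_graph e ->
  ~ has_induced_P e 7 -> ~ has_induced_C e 4 ->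
  ~ has_induced_C e 6 -> ~ has_induced_C e 7 ->
  nice_blowup e B ->
  forall i : 'I_5,
    ~ (exists s : seq T, size s = 4 /\ {subset s <= A3 e B i} /\
         induced_path e s).
Proof.
move=> [e_sym e_irr] _ noC4 noC6 _ [disjB clB _ antiB _] i [s [s4 [sA3 Ps]]].
have antiXY : anticomplete e (B (prv i)) (B (nxt i)).
  by rewrite -[in B (nxt i)]nxt_nxt_prv; apply: antiB.
have disjXY := disjB _ _ (prv_neq_nxt i).
case: s s4 sA3 Ps => [|a [|b [|c [|d [|? ?]]]]] // _ sA3 /induced_path_is_P4 P.
apply: (no_P4_attached_to_two_cliques e_sym e_irr noC4 noC6 (clB _) (clB _) antiXY disjXY P).
by move=> v /sA3 vA3; rewrite !(A3_attached _ vA3) // !inE eqxx ?orbT.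
Qed.
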